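(* Let $G=(V,E)$ be a finite simple graph with at least one vertex, and let $G'$ be its connection graph. For a simplex $x$ and an integer $k\ge 1$, let $P(k,x)$ be the number of walks of length $k$ in $G'$ starting at $x$. Put $P(k)=\max_x P(k,x)$ and $r_k=1+P(k)^{1/k}$. Then, for every $k\ge 1$, the spectral radius $\rho$ of the Hodge Laplacian $H=(d+d^T)^2$ of $G$ satisfies $$\rho \le r_k-\frac{1}{r_k}.$$ Moreover, $r_k - 1/r_k$ converges, as $k\to\infty$, to the spectral radius of the sign-less Hodge Laplacian $|H|$.
   Context: Let $G=(V,E)$ be a finite simple graph. Its associated $1$-dimensional simplicial complex is the set of simplices $X=\{\{v\}: v\in V\}\cup E$, where each edge is regarded as a $2$-element subset of $V$; put $N=|V|+|E|$ and index $N\times N$ matrices by $X$. The connection graph $G'$ has vertex set $X$, and two distinct $x,y\in X$ are adjacent iff $x\cap y\neq\emptyset$. A walk of length $k$ from $x$ is a sequence $x=x_0,x_1,\dots,x_k$ of vertices of $G'$ in which consecutive entries are adjacent. For the Hodge Laplacian, fix an orientation of each edge; for an edge $x=\{a,b\}$ oriented from $a$ to $b$ set $d(x,\{a\})=-1$, $d(x,\{b\})=1$, and let all other entries of $d$ be $0$. The Hodge Laplacian is $H=(d+d^T)^2$; its spectrum does not depend on the chosen orientation. The sign-less exterior derivative $|d|$ has $|d|(x,y)=1$ if $y\subset x$ and $|x|=|y|+1$, and $0$ otherwise; the sign-less Hodge Laplacian is $|H|=(|d|+|d|^T)^2$. *)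

From Stdlib Require Import Reals Lra Lia Arith List Bool.
Import ListNotations.
Open Scope R_scope.

(* A finite simple graph on vertex set {0,...,n-1}, given by a boolean
   adjacency relation adj (assumed symmetric and irreflexive). *)

(* Simplices of the 1-dimensional complex: vertices {i} and edges {i,j},
   an edge being stored as SE i j with i < j. *)
Inductive simplex : Type := SV (i : nat) | SE (i j : nat).

Definition simplex_eqb (x y : simplex) : bool :=
  match x, y with
  | SV i, SV j => Nat.eqb i j
  | SE a b, SE c d => Nat.eqb a c && Nat.eqb b d
  | _, _ => false
  end.

Definition simplices (n : nat) (adj : nat -> nat -> bool) : list simplex :=
  map SV (seq 0 n) ++
  flat_map (fun i =>
    flat_map (fun j => if adj i j then [SE i j] else [])
             (seq (S i) (n - S i)))
    (seq 0 n).

Definition meets (x y : simplex) : bool :=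
  match x, y with
  | SV i, SV j => Nat.eqb i j
  | SV i, SE a b | SE a b, SV i => Nat.eqb i a || Nat.eqb i b
  | SE a b, SE c d => Nat.eqb a c || Nat.eqb a d || Nat.eqb b c || Nat.eqb b d
  end.

Definition cg_adj (x y : simplex) : bool := negb (simplex_eqb x y) && meets x y.

Fixpoint walks (X : list simplex) (k : nat) (x : simplex) : nat :=
  match k with
  | O => 1%nat
  | S k' => fold_right Nat.add 0%nat
              (map (fun y => if cg_adj x y then walks X k' y else 0%nat) X)
  end.

Definition Pmax (X : list simplex) (k : nat) : nat :=
  fold_right Nat.max 0%nat (map (walks X k) X).

(* k-th root of a nonnegative real (with root of 0 equal to 0). *)
Definition kth_root (x : R) (k : nat) : R :=
  if Rle_dec x 0 then 0 else Rpower x (/ INR k).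

Definition rk (X : list simplex) (k : nat) : R :=
  1 + kth_root (INR (Pmax X k)) k.

Definition hbound (X : list simplex) (k : nat) : R := rk X k - / rk X k.

(* Matrices and vectors indexed by simplices; only entries in X matter. *)
Definition Mat := simplex -> simplex -> R.

Definition sumX (X : list simplex) (f : simplex -> R) : R :=
  fold_right Rplus 0 (map f X).

Definition mat_mul (X : list simplex) (A B : Mat) : Mat :=
  fun x y => sumX X (fun z => A x z * B z y).

Definition transp (A : Mat) : Mat := fun x y => A y x.
Definition mat_add (A B : Mat) : Mat := fun x y => A x y + B x y.

(* Exterior derivative for an orientation o: the edge {a,b} (a<b) is oriented
   from a to b if o a b = true, from b to a otherwise. *)
Definition dmat (o : nat -> nat -> bool) : Mat :=
  fun x y =>
    match x, y with
    | SE a b, SV c =>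
        let s := if o a b then a else b in
        let t := if o a b then b else a in
        if Nat.eqb c s then -1 else if Nat.eqb c t then 1 else 0
    | _, _ => 0
    end.

Definition absdmat : Mat :=
  fun x y =>
    match x, y with
    | SE a b, SV c => if Nat.eqb c a || Nat.eqb c b then 1 else 0
    | _, _ => 0
    end.

Definition hodge (X : list simplex) (o : nat -> nat -> bool) : Mat :=
  let D := mat_add (dmat o) (transp (dmat o)) in mat_mul X D D.

Definition abs_hodge (X : list simplex) : Mat :=
  let D := mat_add absdmat (transp absdmat) in mat_mul X D D.

(* a + i b is a (complex) eigenvalue of M (as an operator on R^X ⊗ C):
   there is a nonzero u + i v with M(u + i v) = (a + i b)(u + i v). *)
Definition is_eigenvalue (X : list simplex) (M : Mat) (a b : R) : Prop :=
  exists u v : simplex -> R,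
    (exists z, In z X /\ (u z <> 0 \/ v z <> 0)) /\
    forall x, In x X ->
      sumX X (fun z => M x z * u z) = a * u x - b * v x /\
      sumX X (fun z => M x z * v z) = b * u x + a * v x.

Definition spectral_radius (X : list simplex) (M : Mat) (rho : R) : Prop :=
  (exists a b, is_eigenvalue X M a b /\ sqrt (a * a + b * b) = rho) /\
  (forall a b, is_eigenvalue X M a b -> sqrt (a * a + b * b) <= rho).

(* Let A be the adjacency matrix of the connection graph, K = |d| + |d|^T and L = 1 + A.
   Splitting a cochain u into its vertex and edge parts, L u = u + K u + K^2 u_E - 2 u_E, where
   u_E is the edge part; this yields L^2 - 1 = K^2 L and K^2 L = L K^2.  Hence |H| = K^2 has
   largest eigenvalue r - 1/r with r = 1 + a, a the largest eigenvalue of A (its spectral radius,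
   as A >= 0).  Walk counts satisfy a^k <= P(k) <= a^k |X|, so P(k)^(1/k) tends to a from above
   and r_k >= r.  Finally |H| dominates H entrywise, so the spectral radius of H is at most
   that of |H|.  Largest eigenvalues of symmetric matrices are obtained as suprema of Rayleigh
   quotients. *)

From Stdlib Require Import Reals Lra Lia List Bool Classical FunctionalExtensionality.
Import ListNotations.
Open Scope R_scope.

Definition simplex_eq_dec : forall x y : simplex, {x = y} + {x <> y}.
Proof. decide equality; apply Nat.eq_dec. Defined.

Section Sums.
Implicit Types (X : list simplex) (f g : simplex -> R).

Lemma sumX_nil f : sumX [] f = 0. Proof. reflexivity. Qed.
Lemma sumX_cons a X f : sumX (a :: X) f = f a + sumX X f. Proof. reflexivity. Qed.
Lemma sumX_app X Y f : sumX (X ++ Y) f = sumX X f + sumX Y f.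
Proof. induction X as [|a X IH]; simpl List.app; [rewrite sumX_nil; lra|]. rewrite !sumX_cons, IH; lra. Qed.

Lemma sumX_ext X f g : (forall x, In x X -> f x = g x) -> sumX X f = sumX X g.
Proof. induction X as [|a X IH]; intros H; [reflexivity|]. rewrite !sumX_cons.
  rewrite H by (left; auto). rewrite IH; auto. intros; apply H; right; auto. Qed.

Lemma sumX_add X f g : sumX X (fun x => f x + g x) = sumX X f + sumX X g.
Proof. induction X as [|a X IH]; [simpl; unfold sumX; simpl; lra|]. rewrite !sumX_cons, IH; lra. Qed.

Lemma sumX_sub X f g : sumX X (fun x => f x - g x) = sumX X f - sumX X g.
Proof. induction X as [|a X IH]; [simpl; unfold sumX; simpl; lra|]. rewrite !sumX_cons, IH; lra. Qed.

Lemma sumX_scal X c f : sumX X (fun x => c * f x) = c * sumX X f.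
Proof. induction X as [|a X IH]; [simpl; unfold sumX; simpl; lra|]. rewrite !sumX_cons, IH; lra. Qed.

Lemma sumX_scal_r X c f : sumX X (fun x => f x * c) = sumX X f * c.
Proof. induction X as [|a X IH]; [simpl; unfold sumX; simpl; lra|]. rewrite !sumX_cons, IH; lra. Qed.

Lemma sumX_opp X f : sumX X (fun x => - f x) = - sumX X f.
Proof. induction X as [|a X IH]; [simpl; unfold sumX; simpl; lra|]. rewrite !sumX_cons, IH; lra. Qed.

Lemma sumX_zero X f : (forall x, In x X -> f x = 0) -> sumX X f = 0.
Proof. intros H. rewrite (sumX_ext X f (fun _ => 0)) by auto.
  induction X; [reflexivity|]. rewrite sumX_cons, IHX; [lra|]. intros; apply H; right; auto. Qed.

Lemma sumX_le X f g : (forall x, In x X -> f x <= g x) -> sumX X f <= sumX X g.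
Proof. induction X as [|a X IH]; intros H; [unfold sumX; simpl; lra|]. rewrite !sumX_cons.
  assert (f a <= g a) by (apply H; left; auto).
  assert (sumX X f <= sumX X g) by (apply IH; intros; apply H; right; auto). lra. Qed.

Lemma sumX_nonneg X f : (forall x, In x X -> 0 <= f x) -> 0 <= sumX X f.
Proof. intros H. rewrite <- (sumX_zero X (fun _ => 0)) by auto. apply sumX_le; auto. Qed.

Lemma sumX_term X f x : (forall y, In y X -> 0 <= f y) -> In x X -> f x <= sumX X f.
Proof. induction X as [|a X IH]; intros H Hx; [destruct Hx|]. rewrite sumX_cons.
  destruct Hx as [<-|Hx].
  - assert (0 <= sumX X f) by (apply sumX_nonneg; intros; apply H; right; auto). lra.
  - assert (0 <= f a) by (apply H; left; auto).
    assert (f x <= sumX X f) by (apply IH; auto; intros; apply H; right; auto). lra. Qed.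

Lemma sumX_swap X Y (F : simplex -> simplex -> R) :
  sumX X (fun x => sumX Y (fun y => F x y)) = sumX Y (fun y => sumX X (fun x => F x y)).
Proof. induction X as [|a X IH].
  - rewrite sumX_nil. symmetry. apply sumX_zero. intros; reflexivity.
  - rewrite sumX_cons, IH. rewrite <- sumX_add. apply sumX_ext. intros; rewrite sumX_cons; reflexivity. Qed.

Lemma sumX_abs X f : Rabs (sumX X f) <= sumX X (fun x => Rabs (f x)).
Proof. induction X as [|a X IH]; [unfold sumX; simpl; rewrite Rabs_R0; lra|]. rewrite !sumX_cons.
  eapply Rle_trans; [apply Rabs_triang|]. lra. Qed.

Lemma sumX_delta X x f : NoDup X -> In x X ->
  sumX X (fun z => if simplex_eq_dec z x then f z else 0) = f x.
Proof. induction X as [|a X IH]; intros Hnd Hx; [destruct Hx|]. inversion Hnd; subst.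
  rewrite sumX_cons. destruct Hx as [<-|Hx].
  - destruct (simplex_eq_dec a a); [|congruence]. rewrite sumX_zero; [lra|].
    intros y Hy. destruct (simplex_eq_dec y a); [subst; contradiction|reflexivity].
  - destruct (simplex_eq_dec a x); [subst; contradiction|]. rewrite IH; auto; lra. Qed.

Lemma sumX_delta' X x f : NoDup X -> In x X ->
  sumX X (fun z => if simplex_eq_dec x z then f z else 0) = f x.
Proof. intros. rewrite <- (sumX_delta X x f) by auto. apply sumX_ext; intros.
  destruct (simplex_eq_dec x x0), (simplex_eq_dec x0 x); subst; congruence. Qed.

Lemma sumX_const1 X : sumX X (fun _ => 1) = INR (length X).
Proof. induction X; [reflexivity|]. rewrite sumX_cons, IHX. simpl length. rewrite S_INR. lra. Qed.


End Sums.

(** * Quadratic forms of symmetric matrices *)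

Definition dot (X : list simplex) (u v : simplex -> R) : R := sumX X (fun x => u x * v x).
Definition mv (X : list simplex) (M : Mat) (u : simplex -> R) : simplex -> R :=
  fun x => sumX X (fun z => M x z * u z).
Definition quad (X : list simplex) (M : Mat) (v : simplex -> R) : R := dot X v (mv X M v).
Definition sym_on (X : list simplex) (M : Mat) : Prop := forall x y, In x X -> In y X -> M x y = M y x.
Definition nonzero_on (X : list simplex) (u : simplex -> R) : Prop := exists z, In z X /\ u z <> 0.
Definition top_eig (X : list simplex) (M : Mat) (lam : R) : Prop :=
  (exists u, nonzero_on X u /\ forall x, In x X -> mv X M u x = lam * u x) /\
  forall v, quad X M v <= lam * dot X v v.
Definition mopp (M : Mat) : Mat := fun x y => - M x y.
Definition upd (a : simplex) (t : R) (v : simplex -> R) : simplex -> R :=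
  fun z => if simplex_eq_dec z a then t else v z.
Definition unit_vec (x : simplex) : simplex -> R := fun z => if simplex_eq_dec z x then 1 else 0.

Lemma dot_nonneg X v : 0 <= dot X v v.
Proof. apply sumX_nonneg; intros; nra. Qed.

Lemma sq_le_dot X v x : In x X -> v x * v x <= dot X v v.
Proof. intros; apply (sumX_term X (fun x => v x * v x)); auto; intros; nra. Qed.

Lemma dot_pos X v : nonzero_on X v -> 0 < dot X v v.
Proof. intros [z [Hz Hv]]. pose proof (sq_le_dot X v z Hz).
  assert (0 < v z * v z) by (apply Rsqr_pos_lt; auto). lra. Qed.

Lemma dot_self_eq0 X v : dot X v v = 0 -> forall x, In x X -> v x = 0.
Proof. intros H x Hx. destruct (Req_dec (v x) 0); auto.
  assert (0 < dot X v v) by (apply dot_pos; exists x; auto). lra. Qed.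

Lemma dot_ext X u u' v v' : (forall x, In x X -> u x = u' x) -> (forall x, In x X -> v x = v' x) ->
  dot X u v = dot X u' v'.
Proof. intros. apply sumX_ext; intros. rewrite H, H0; auto. Qed.

Lemma mv_ext X M u u' x : (forall z, In z X -> u z = u' z) -> mv X M u x = mv X M u' x.
Proof. intros. apply sumX_ext; intros. rewrite H; auto. Qed.

Lemma quad_ext X M u u' : (forall z, In z X -> u z = u' z) -> quad X M u = quad X M u'.
Proof. intros. unfold quad. apply dot_ext; auto. intros; apply mv_ext; auto. Qed.

Lemma dot_mv_sym X M u w : sym_on X M -> dot X u (mv X M w) = dot X (mv X M u) w.
Proof. intros Hs. unfold dot, mv.
  transitivity (sumX X (fun x => sumX X (fun z => u x * M x z * w z))).
  { apply sumX_ext; intros. rewrite <- sumX_scal. apply sumX_ext; intros; ring. }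
  rewrite sumX_swap. apply sumX_ext; intros z Hz. rewrite <- sumX_scal_r. apply sumX_ext; intros x Hx.
  rewrite (Hs x z) by auto. ring. Qed.

Lemma quad_eigvec X M u mu : (forall x, In x X -> mv X M u x = mu * u x) -> quad X M u = mu * dot X u u.
Proof. intros H. unfold quad, dot. rewrite <- sumX_scal. apply sumX_ext; intros. rewrite H; auto; ring. Qed.

Lemma eigenvalue_le_top_eig X M lam u mu : top_eig X M lam -> nonzero_on X u ->
  (forall x, In x X -> mv X M u x = mu * u x) -> mu <= lam.
Proof. intros [_ Ht] Hnz He. pose proof (Ht u). rewrite (quad_eigvec X M u mu He) in H.
  pose proof (dot_pos X u Hnz). apply Rmult_le_reg_r with (dot X u u); auto. Qed.

Lemma dot_scal X c v : dot X (fun x => c * v x) (fun x => c * v x) = c * c * dot X v v.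
Proof. unfold dot. rewrite <- sumX_scal. apply sumX_ext; intros; ring. Qed.

Lemma mv_scal X M c v x : mv X M (fun z => c * v z) x = c * mv X M v x.
Proof. unfold mv. rewrite <- sumX_scal. apply sumX_ext; intros; ring. Qed.

Lemma quad_scal X M c v : quad X M (fun x => c * v x) = c * c * quad X M v.
Proof. unfold quad, dot. rewrite <- sumX_scal. apply sumX_ext; intros.
  rewrite mv_scal. ring. Qed.

Lemma quad_zero X M v : (forall x, In x X -> v x = 0) -> quad X M v = 0.
Proof. intros H. unfold quad, dot. apply sumX_zero. intros. rewrite H; auto; ring. Qed.

Lemma mv_mopp X M u x : mv X (mopp M) u x = - mv X M u x.
Proof. unfold mv, mopp. rewrite <- sumX_opp. apply sumX_ext; intros; ring. Qed.

Lemma quad_mopp X M v : quad X (mopp M) v = - quad X M v.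
Proof. unfold quad, dot. rewrite <- sumX_opp. apply sumX_ext; intros. rewrite mv_mopp; ring. Qed.

Lemma mopp_sym X M : sym_on X M -> sym_on X (mopp M).
Proof. intros H x y Hx Hy. unfold mopp. rewrite H; auto. Qed.

Lemma sumX_unit_vec_l X y g : NoDup X -> In y X -> sumX X (fun x => unit_vec y x * g x) = g y.
Proof. intros. rewrite <- (sumX_delta X y g) by auto. apply sumX_ext; intros. unfold unit_vec.
  destruct (simplex_eq_dec x y); ring. Qed.

Lemma sumX_unit_vec_r X y g : NoDup X -> In y X -> sumX X (fun x => g x * unit_vec y x) = g y.
Proof. intros. rewrite <- (sumX_unit_vec_l X y g) by auto. apply sumX_ext; intros; ring. Qed.

Lemma mv_unit_vec X M y x : NoDup X -> In y X -> mv X M (unit_vec y) x = M x y.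
Proof. intros; unfold mv; apply sumX_unit_vec_r; auto. Qed.

Lemma quad_unit_vec X M y : NoDup X -> In y X -> quad X M (unit_vec y) = M y y.
Proof. intros. unfold quad, dot. rewrite sumX_unit_vec_l by auto. apply mv_unit_vec; auto. Qed.

Lemma dot_unit_vec X y : NoDup X -> In y X -> dot X (unit_vec y) (unit_vec y) = 1.
Proof. intros. unfold dot. rewrite sumX_unit_vec_l by auto. unfold unit_vec.
  destruct (simplex_eq_dec y y); congruence. Qed.

Lemma abs_prod_le a b : Rabs a * Rabs b <= (a * a + b * b) / 2.
Proof. pose proof (Rabs_pos a). pose proof (Rabs_pos b).
  assert (a * a = Rabs a * Rabs a) by (pose proof (Rsqr_abs a); unfold Rsqr in *; lra).
  assert (b * b = Rabs b * Rabs b) by (pose proof (Rsqr_abs b); unfold Rsqr in *; lra).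
  rewrite H1, H2. pose proof (Rle_0_sqr (Rabs a - Rabs b)). unfold Rsqr in *. lra. Qed.

Lemma Rabs_quad_le X M v :
  Rabs (quad X M v) <= sumX X (fun x => Rabs (v x) * sumX X (fun z => Rabs (M x z) * Rabs (v z))).
Proof. unfold quad, dot, mv. eapply Rle_trans; [apply sumX_abs|]. apply sumX_le; intros.
  rewrite Rabs_mult. apply Rmult_le_compat_l; [apply Rabs_pos|]. eapply Rle_trans; [apply sumX_abs|].
  apply sumX_le; intros. rewrite Rabs_mult; lra. Qed.

Lemma quad_bounded X M : exists K, forall v, quad X M v <= K * dot X v v.
Proof. exists (sumX X (fun x => sumX X (fun z => Rabs (M x z)))). intros v.
  eapply Rle_trans; [apply Rle_abs|]. eapply Rle_trans; [apply Rabs_quad_le|].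
  rewrite <- sumX_scal_r. apply sumX_le; intros x Hx. rewrite <- sumX_scal_r, <- sumX_scal.
  apply sumX_le; intros z Hz.
  pose proof (abs_prod_le (v x) (v z)). pose proof (sq_le_dot X v x Hx). pose proof (sq_le_dot X v z Hz).
  pose proof (Rabs_pos (M x z)).
  assert (Rabs (v x) * Rabs (v z) <= dot X v v) by lra.
  replace (Rabs (v x) * (Rabs (M x z) * Rabs (v z))) with (Rabs (M x z) * (Rabs (v x) * Rabs (v z))) by ring.
  apply Rmult_le_compat_l; auto. Qed.

Lemma cauchy_schwarz X f g : sumX X (fun x => f x * g x) * sumX X (fun x => f x * g x) <= dot X f f * dot X g g.
Proof. set (C := sumX X (fun x => f x * g x)). set (A := dot X f f). set (B := dot X g g).
  assert (HA : 0 <= A) by apply dot_nonneg. assert (HB : 0 <= B) by apply dot_nonneg.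
  destruct (Req_dec A 0) as [H0|H0].
  - assert (C = 0). { unfold C. apply sumX_zero. intros. rewrite (dot_self_eq0 X f H0 x); auto; ring. }
    rewrite H, H0. lra.
  - set (t := C / A).
    assert (0 <= sumX X (fun x => (t * f x - g x) * (t * f x - g x)))
      by (apply sumX_nonneg; intros; apply Rle_0_sqr).
    assert (sumX X (fun x => (t * f x - g x) * (t * f x - g x)) = t * t * A - 2 * t * C + B).
    { unfold A, B, C, dot. rewrite <- !sumX_scal, <- sumX_sub, <- sumX_add.
      apply sumX_ext; intros; ring. }
    assert (t * t * A - 2 * t * C + B = B - C * C / A) by (unfold t; field; auto).
    assert (0 < A) by lra.
    assert (0 <= B - C * C / A) by lra.
    assert (C * C / A * A = C * C) by (field; auto).
    nra. Qed.

Ltac in_tac := solve [left; reflexivity | right; assumption | assumption | simpl; auto].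

Lemma quad_cons a X M v : sym_on (a :: X) M ->
  quad (a :: X) M v = M a a * (v a * v a) + 2 * v a * sumX X (fun z => M a z * v z) + quad X M v.
Proof. intros Hs. unfold quad, dot, mv. rewrite sumX_cons. rewrite sumX_cons.
  transitivity (v a * (M a a * v a + sumX X (fun z => M a z * v z)) +
     (sumX X (fun x => v a * (M a x * v x)) + sumX X (fun x => v x * sumX X (fun z => M x z * v z)))).
  { f_equal. rewrite <- sumX_add. apply sumX_ext; intros. rewrite sumX_cons.
    rewrite (Hs x a) by in_tac. ring. }
  rewrite sumX_scal. ring. Qed.

Lemma quad_cons_upd a X M t v : ~ In a X -> sym_on (a :: X) M ->
  quad (a :: X) M (upd a t v) = M a a * (t * t) + 2 * t * sumX X (fun z => M a z * v z) + quad X M v.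
Proof. intros Hn Hs. rewrite quad_cons by auto.
  assert (Ha : upd a t v a = t) by (unfold upd; destruct (simplex_eq_dec a a); congruence). rewrite Ha.
  assert (Hin : forall z, In z X -> upd a t v z = v z).
  { intros z Hz. unfold upd. destruct (simplex_eq_dec z a); [subst; contradiction|auto]. }
  rewrite (quad_ext X M (upd a t v) v Hin).
  rewrite (sumX_ext X (fun z => M a z * upd a t v z) (fun z => M a z * v z)); auto.
  intros; rewrite Hin; auto. Qed.

(** * The largest eigenvalue of a symmetric matrix *)

Definition kernel_nontrivial (X : list simplex) (P : Mat) : Prop :=
  exists w, nonzero_on X w /\ forall x, In x X -> mv X P w x = 0.

Definition coercive (X : list simplex) (P : Mat) : Prop :=
  exists c, 0 < c /\ forall v, c * dot X v v <= quad X P v.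

Section Pivot.
Variables (a : simplex) (X : list simplex) (P : Mat).
Hypotheses (Ha : ~ In a X) (HndX : NoDup X) (Hs : sym_on (a :: X) P)
  (Hpsd : forall v, 0 <= quad (a :: X) P v).

Lemma psd_pivot_nonneg : 0 <= P a a.
Proof. pose proof (Hpsd (upd a 1 (fun _ => 0))) as H. rewrite quad_cons_upd in H by auto.
  rewrite quad_zero in H by auto. rewrite sumX_zero in H by (intros; ring). lra. Qed.

Lemma psd_pivot0_kernel : P a a = 0 -> kernel_nontrivial (a :: X) P.
Proof.
  intros H0. exists (unit_vec a). split.
  { exists a. split; [left; auto|]. unfold unit_vec. destruct (simplex_eq_dec a a); [lra|congruence]. }
  intros x Hx. rewrite mv_unit_vec by (auto; constructor; auto).
  destruct Hx as [<-|Hx]; auto.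
  rewrite (Hs x a) by in_tac.
  destruct (Req_dec (P a x) 0) as [|Hne]; auto. exfalso.
  (* a negative value of the quadratic form on the plane spanned by [a] and [x] *)
  set (t := - (P x x + 1) / (2 * P a x)).
  pose proof (Hpsd (upd a t (unit_vec x))) as H. rewrite quad_cons_upd in H by auto.
  rewrite quad_unit_vec, sumX_unit_vec_r, H0 in H by auto.
  assert (2 * t * P a x = - (P x x + 1)) by (unfold t; field; auto). lra.
Qed.

Hypothesis Hp : 0 < P a a.

Let row v := sumX X (fun z => P a z * v z).

Definition schur : Mat := fun x y => P x y - P x a * P a y / P a a.

Lemma schur_sym : sym_on X schur.
Proof. intros x y Hx Hy. unfold schur. rewrite (Hs x y), (Hs x a), (Hs a y) by in_tac. field; lra. Qed.

Lemma mv_schur v x : mv X schur v x = mv X P v x - P x a * row v / P a a.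
Proof. unfold mv, schur, row.
  transitivity (sumX X (fun z => P x z * v z) - P x a / P a a * sumX X (fun z => P a z * v z)).
  { rewrite <- sumX_scal, <- sumX_sub. apply sumX_ext; intros. field; lra. }
  field; lra. Qed.

Lemma quad_schur v : quad X schur v = quad X P v - row v * row v / P a a.
Proof. unfold quad at 1, dot.
  rewrite (sumX_ext X _ (fun x => v x * mv X P v x - row v / P a a * (P a x * v x))).
  2:{ intros. rewrite mv_schur, (Hs x a) by in_tac. field; lra. }
  rewrite sumX_sub, sumX_scal. fold (dot X v (mv X P v)) (quad X P v). unfold row at 3. field; lra. Qed.

(* completing the square in the pivot coordinate *)
Lemma quad_cons_schur v :
  quad (a :: X) P v = P a a * ((v a + row v / P a a) * (v a + row v / P a a)) + quad X schur v.
Proof. rewrite quad_cons, quad_schur by auto. fold (row v). field; lra. Qed.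

Lemma schur_psd v : 0 <= quad X schur v.
Proof. pose proof (Hpsd (upd a (- row v / P a a) v)) as H.
  rewrite quad_cons_upd in H by auto. fold (row v) in H. rewrite quad_schur.
  replace (P a a * (- row v / P a a * (- row v / P a a)) + 2 * (- row v / P a a) * row v + quad X P v)
    with (quad X P v - row v * row v / P a a) in H by (field; lra). lra. Qed.

Lemma schur_kernel_lift : kernel_nontrivial X schur -> kernel_nontrivial (a :: X) P.
Proof.
  intros [w [Hnzw Hw]]. exists (upd a (- row w / P a a) w). split.
  { destruct Hnzw as [z [Hz Hwz]]. exists z. split; [right; auto|]. unfold upd.
    destruct (simplex_eq_dec z a); [subst; contradiction|auto]. }
  intros x Hx. unfold mv. rewrite sumX_cons. unfold upd at 1.
  destruct (simplex_eq_dec a a); [|congruence].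
  rewrite (sumX_ext X _ (fun z => P x z * w z)).
  2:{ intros z Hz. unfold upd. destruct (simplex_eq_dec z a); [subst; contradiction|auto]. }
  fold (mv X P w x). destruct Hx as [<-|Hx].
  - unfold mv at 1. fold (row w). field; lra.
  - pose proof (Hw x Hx) as H. rewrite mv_schur in H. lra.
Qed.

Lemma schur_coercive_lift : coercive X schur -> coercive (a :: X) P.
Proof.
  intros [c' [Hc' Hc]].
  set (beta2 := dot X (fun z => P a z) (fun z => P a z)).
  set (gam := 1 + 2 * beta2 / (P a a * P a a)).
  assert (Hb2 : 0 <= beta2) by apply dot_nonneg.
  assert (Hgam : 1 <= gam).
  { assert (0 <= 2 * beta2 / (P a a * P a a)); [|unfold gam; lra].
    apply Rmult_le_pos; [lra|left; apply Rinv_0_lt_compat; nra]. }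
  set (c := Rmin (P a a / 2) (c' / gam)).
  assert (Hc1 : c <= P a a / 2) by apply Rmin_l.
  assert (Hc2 : c * gam <= c').
  { assert (c <= c' / gam) by apply Rmin_r.
    apply Rmult_le_compat_r with (r := gam) in H; [|lra].
    replace (c' / gam * gam) with c' in H by (field; lra). lra. }
  assert (Hcp : 0 < c) by (unfold c; apply Rmin_glb_lt; [lra|apply Rdiv_lt_0_compat; lra]).
  exists c. split; auto. intros v.
  rewrite quad_cons_schur. pose proof (Hc v).
  assert (Hcs : row v * row v <= beta2 * dot X v v) by apply cauchy_schwarz.
  change (dot (a :: X) v v) with (v a * v a + dot X v v).
  set (t := v a) in *. set (bb := row v) in *. set (D := dot X v v) in *.
  assert (HD : 0 <= D) by apply dot_nonneg.
  set (s := t + bb / P a a).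
  assert (E2 : t * t <= 2 * (s * s) + 2 * (bb / P a a * (bb / P a a))).
  { replace t with (s - bb / P a a) by (unfold s; ring).
    pose proof (Rle_0_sqr (s + bb / P a a)). unfold Rsqr in *. nra. }
  assert (E3 : bb / P a a * (bb / P a a) <= beta2 * D / (P a a * P a a)).
  { replace (bb / P a a * (bb / P a a)) with (bb * bb / (P a a * P a a)) by (field; lra).
    unfold Rdiv. apply Rmult_le_compat_r; [left; apply Rinv_0_lt_compat; nra|]. auto. }
  assert (E4 : c * (t * t) <= 2 * c * (s * s) + c * (gam - 1) * D).
  { replace (c * (gam - 1) * D) with (2 * c * (beta2 * D / (P a a * P a a)))
      by (unfold gam; field; lra). nra. }
  assert (E5 : 2 * c * (s * s) <= P a a * (s * s)) by (pose proof (Rle_0_sqr s); unfold Rsqr in *; nra).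
  assert (E6 : c * gam * D <= c' * D) by nra.
  lra.
Qed.

End Pivot.

(* Gaussian elimination on the first coordinate: a zero pivot yields a kernel vector, a positive
   one reduces to the Schur complement *)
Lemma psd_kernel_or_coercive X P : NoDup X -> sym_on X P -> (forall v, 0 <= quad X P v) ->
  kernel_nontrivial X P \/ coercive X P.
Proof.
  revert P. induction X as [|a X IH]; intros P Hnd Hs Hpsd.
  { right. exists 1. split; [lra|]. intros v. unfold quad, dot. rewrite !sumX_nil. lra. }
  inversion Hnd as [|? ? Hna HndX]; subst.
  pose proof (psd_pivot_nonneg a X P Hna Hs Hpsd) as Hpaa.
  destruct (Req_dec (P a a) 0) as [H0|H0]; [left; apply psd_pivot0_kernel; auto|].
  assert (Hp : 0 < P a a) by lra.
  destruct (IH (schur a P) HndX (schur_sym a X P Hs Hp) (schur_psd a X P Hna Hs Hpsd Hp)).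
  - left; apply schur_kernel_lift; auto.
  - right; apply schur_coercive_lift; auto.
Qed.

Definition shift_mat (lam : R) (M : Mat) : Mat := fun x y => (if simplex_eq_dec x y then lam else 0) - M x y.

Lemma mv_shift_mat X lam M v x : NoDup X -> In x X -> mv X (shift_mat lam M) v x = lam * v x - mv X M v x.
Proof. intros. unfold mv, shift_mat.
  rewrite (sumX_ext X _ (fun z => (if simplex_eq_dec x z then lam * v z else 0) - M x z * v z)).
  2:{ intros; destruct (simplex_eq_dec x x0); ring. }
  rewrite sumX_sub. rewrite sumX_delta' by auto. reflexivity. Qed.

Lemma quad_shift_mat X lam M v : NoDup X -> quad X (shift_mat lam M) v = lam * dot X v v - quad X M v.
Proof. intros Hnd. unfold quad at 1, dot at 1.
  rewrite (sumX_ext X _ (fun x => lam * (v x * v x) - v x * mv X M v x)).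
  2:{ intros. rewrite mv_shift_mat by auto. ring. }
  rewrite sumX_sub, sumX_scal. reflexivity. Qed.

Lemma shift_mat_sym X lam M : sym_on X M -> sym_on X (shift_mat lam M).
Proof. intros Hs x y Hx Hy. unfold shift_mat. rewrite (Hs x y) by auto.
  destruct (simplex_eq_dec x y), (simplex_eq_dec y x); subst; congruence || ring. Qed.

Lemma rayleigh_sup X M : NoDup X -> X <> [] ->
  exists lam, (forall v, quad X M v <= lam * dot X v v) /\
              (forall mu, (forall v, quad X M v <= mu * dot X v v) -> lam <= mu).
Proof.
  intros Hnd Hne. destruct (quad_bounded X M) as [K HK].
  set (S := fun q => exists v, dot X v v = 1 /\ q = quad X M v).
  assert (Hb : bound S). { exists K. intros q [v [Hv ->]]. pose proof (HK v). rewrite Hv in H. lra. }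
  destruct X as [|x0 X']; [congruence|]. set (X := x0 :: X') in *.
  assert (Hex : exists q, S q).
  { exists (quad X M (unit_vec x0)), (unit_vec x0). split; auto. apply dot_unit_vec; auto. left; auto. }
  destruct (completeness S Hb Hex) as [lam [Hub Hlub]].
  exists lam. split.
  - intros v. destruct (Req_dec (dot X v v) 0) as [Hd|Hd].
    { rewrite quad_zero; [rewrite Hd; lra|]. apply dot_self_eq0; auto. }
    assert (Hdp : 0 < dot X v v) by (pose proof (dot_nonneg X v); lra).
    set (c := / sqrt (dot X v v)).
    assert (Hc2 : c * c = / dot X v v).
    { unfold c. rewrite <- Rinv_mult, sqrt_sqrt by lra. reflexivity. }
    assert (HS : S (quad X M (fun x => c * v x))).
    { exists (fun x => c * v x). split; auto. rewrite dot_scal, Hc2. field. lra. }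
    pose proof (Hub _ HS) as H. rewrite quad_scal, Hc2 in H.
    apply (Rmult_le_compat_r (dot X v v)) in H; [|lra].
    replace (/ dot X v v * quad X M v * dot X v v) with (quad X M v) in H by (field; lra). lra.
  - intros mu Hmu. apply Hlub. intros q [v [Hv ->]]. pose proof (Hmu v). rewrite Hv in H. lra.
Qed.

(* [lam - M] is positive semidefinite, and coercivity would contradict the minimality of [lam] *)
Lemma top_eig_exists X M : NoDup X -> X <> [] -> sym_on X M -> exists lam, top_eig X M lam.
Proof.
  intros Hnd Hne Hs. destruct (rayleigh_sup X M Hnd Hne) as [lam [Hub Hleast]].
  exists lam. split; auto.
  destruct (psd_kernel_or_coercive X (shift_mat lam M) Hnd (shift_mat_sym X lam M Hs))
    as [[w [Hw Hw0]]|[c [Hc Hcq]]].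
  { intros v. rewrite quad_shift_mat by auto. pose proof (Hub v). lra. }
  - exists w. split; auto. intros x Hx. pose proof (Hw0 x Hx). rewrite mv_shift_mat in H by auto. lra.
  - exfalso. assert (lam <= lam - c); [|lra]. apply Hleast. intros v.
    pose proof (Hcq v). rewrite quad_shift_mat in H by auto. lra.
Qed.

(** * Spectral radius *)

Lemma is_eigenvalue_real X M u mu : nonzero_on X u ->
  (forall x, In x X -> mv X M u x = mu * u x) -> is_eigenvalue X M mu 0.
Proof.
  intros [z [Hz Huz]] Hu. exists u, (fun _ => 0). split; [exists z; auto|].
  intros x Hx. split.
  - change (mv X M u x = mu * u x - 0 * 0). rewrite Hu; auto; ring.
  - change (mv X M (fun _ => 0) x = 0 * u x + mu * 0). unfold mv. rewrite sumX_zero; [ring|].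
    intros; ring.
Qed.

(* the imaginary part [b] vanishes because [<v, M u> = <M v, u>] *)
Lemma sym_is_eigenvalue_real X M a b : sym_on X M -> is_eigenvalue X M a b ->
  b = 0 /\ exists w, nonzero_on X w /\ forall x, In x X -> mv X M w x = a * w x.
Proof.
  intros Hs [u [v [Hnz He]]].
  assert (Hu : forall x, In x X -> mv X M u x = a * u x - b * v x) by (intros; apply He; auto).
  assert (Hv : forall x, In x X -> mv X M v x = b * u x + a * v x) by (intros; apply He; auto).
  assert (Hb : b = 0).
  { pose proof (dot_mv_sym X M v u Hs) as H.
    rewrite (dot_ext X v v _ (fun x => a * u x - b * v x)) in H by auto.
    rewrite (dot_ext X (mv X M v) (fun x => b * u x + a * v x) u u) in H by auto.
    assert (E1 : dot X v (fun x => a * u x - b * v x) = a * dot X u v - b * dot X v v)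
      by (unfold dot; rewrite <- !sumX_scal, <- sumX_sub; apply sumX_ext; intros; ring).
    assert (E2 : dot X (fun x => b * u x + a * v x) u = b * dot X u u + a * dot X u v)
      by (unfold dot; rewrite <- !sumX_scal, <- sumX_add; apply sumX_ext; intros; ring).
    rewrite E1, E2 in H.
    assert (0 < dot X u u + dot X v v).
    { destruct Hnz as [z [Hz [Hz'|Hz']]].
      - pose proof (dot_pos X u (ex_intro _ z (conj Hz Hz'))). pose proof (dot_nonneg X v). lra.
      - pose proof (dot_pos X v (ex_intro _ z (conj Hz Hz'))). pose proof (dot_nonneg X u). lra. }
    nra. }
  split; auto. subst b. destruct Hnz as [z [Hz [Hz'|Hz']]].
  - exists u. split; [exists z; auto|]. intros. rewrite Hu; auto; ring.
  - exists v. split; [exists z; auto|]. intros. rewrite Hv; auto; ring.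
Qed.

Lemma top_eig_add_mopp_nonneg X M l1 l2 : top_eig X M l1 -> top_eig X (mopp M) l2 -> 0 <= l1 + l2.
Proof.
  intros [[u [Hu _]] Hq1] [_ Hq2]. pose proof (Hq1 u). pose proof (Hq2 u).
  rewrite quad_mopp in H0. pose proof (dot_pos X u Hu). nra.
Qed.

Lemma spectral_radius_top_eig X M l1 l2 : sym_on X M -> top_eig X M l1 -> top_eig X (mopp M) l2 ->
  spectral_radius X M (Rmax l1 l2).
Proof.
  intros Hs T1 T2. pose proof (top_eig_add_mopp_nonneg X M l1 l2 T1 T2) as Hsum. split.
  - destruct (Rle_dec l2 l1).
    + rewrite Rmax_left by lra. destruct T1 as [[u [Hu Hue]] _]. exists l1, 0.
      split; [apply (is_eigenvalue_real X M u); auto|].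
      replace (l1 * l1 + 0 * 0) with (l1 * l1) by ring. apply sqrt_square. lra.
    + rewrite Rmax_right by lra. destruct T2 as [[u [Hu Hue]] _]. exists (- l2), 0.
      split; [apply (is_eigenvalue_real X M u); auto|].
      { intros x Hx. pose proof (Hue x Hx). rewrite mv_mopp in H. lra. }
      replace (- l2 * - l2 + 0 * 0) with (l2 * l2) by ring. apply sqrt_square. lra.
  - intros a b He. destruct (sym_is_eigenvalue_real X M a b Hs He) as [-> [w [Hw Hwe]]].
    replace (a * a + 0 * 0) with (Rsqr a) by (unfold Rsqr; ring). rewrite sqrt_Rsqr_abs.
    pose proof (eigenvalue_le_top_eig X M l1 w a T1 Hw Hwe).
    assert (forall x, In x X -> mv X (mopp M) w x = - a * w x) by (intros; rewrite mv_mopp, Hwe; auto; ring).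
    pose proof (eigenvalue_le_top_eig X (mopp M) l2 w (- a) T2 Hw H0).
    unfold Rabs. destruct (Rcase_abs a); [apply Rle_trans with l2|apply Rle_trans with l1];
      solve [lra | apply Rmax_l | apply Rmax_r].
Qed.

Lemma top_eig_dominated X M N l m : top_eig X M l -> top_eig X N m ->
  (forall x y, Rabs (M x y) <= N x y) -> l <= m.
Proof.
  intros [[u [Hu Hue]] _] [_ HN] Hd.
  set (au := fun x => Rabs (u x)).
  assert (Hdd : dot X au au = dot X u u).
  { unfold dot, au. apply sumX_ext; intros. rewrite <- Rabs_mult. apply Rabs_right.
    pose proof (Rle_0_sqr (u x)); unfold Rsqr in *; lra. }
  assert (H1 : l * dot X u u <= quad X N au).
  { rewrite <- (quad_eigvec X M u l Hue). eapply Rle_trans; [apply Rle_abs|].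
    eapply Rle_trans; [apply Rabs_quad_le|]. unfold quad, dot, mv. apply sumX_le; intros.
    apply Rmult_le_compat_l; [apply Rabs_pos|]. apply sumX_le; intros.
    apply Rmult_le_compat_r; [apply Rabs_pos|]. auto. }
  pose proof (HN au). rewrite Hdd in H. pose proof (dot_pos X u Hu).
  apply Rmult_le_reg_r with (dot X u u); auto. lra. Qed.

Lemma diag_le_top_eig X M lam x : NoDup X -> In x X -> top_eig X M lam -> M x x <= lam.
Proof. intros Hnd Hx [_ Ht]. pose proof (Ht (unit_vec x)) as H.
  rewrite quad_unit_vec, dot_unit_vec in H by auto. lra. Qed.

Lemma top_eig_mopp_le X M l l' : (forall x y, 0 <= M x y) ->
  top_eig X (mopp M) l' -> top_eig X M l -> l' <= l.
Proof. intros HM T' T. apply (top_eig_dominated X (mopp M) M l' l T' T). intros x y. unfold mopp.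
  rewrite Rabs_Ropp, Rabs_right; [lra|apply Rle_ge, HM]. Qed.

Lemma spectral_radius_nonneg X M l : NoDup X -> X <> [] -> sym_on X M ->
  (forall x y, 0 <= M x y) -> top_eig X M l -> spectral_radius X M l.
Proof. intros Hnd Hne Hs HM T.
  destruct (top_eig_exists X (mopp M) Hnd Hne (mopp_sym X M Hs)) as [l' T'].
  rewrite <- (Rmax_left l l') by (apply (top_eig_mopp_le X M); auto).
  apply spectral_radius_top_eig; auto. Qed.

Lemma spectral_radius_dominated X M N eta : NoDup X -> X <> [] -> sym_on X M ->
  (forall x y, Rabs (M x y) <= N x y) -> top_eig X N eta ->
  exists rho, spectral_radius X M rho /\ rho <= eta.
Proof. intros Hnd Hne Hs HMN T.
  destruct (top_eig_exists X M Hnd Hne Hs) as [l1 T1].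
  destruct (top_eig_exists X (mopp M) Hnd Hne (mopp_sym X M Hs)) as [l2 T2].
  exists (Rmax l1 l2). split; [apply spectral_radius_top_eig; auto|].
  apply Rmax_lub; [apply (top_eig_dominated X M N)|apply (top_eig_dominated X (mopp M) N)]; auto.
  intros x y; unfold mopp; rewrite Rabs_Ropp; auto. Qed.

(** * Powers of a symmetric matrix *)

Lemma INR_length_ge1 {A : Type} (l : list A) : l <> [] -> 1 <= INR (length l).
Proof. destruct l; [congruence|]. intros _. simpl length. rewrite S_INR.
  pose proof (pos_INR (length l)). lra. Qed.

Lemma exists_argmax {A : Type} (X : list A) (f : A -> R) : X <> [] ->
  exists x0, In x0 X /\ forall x, In x X -> f x <= f x0.
Proof.
  induction X as [|a X IH]; intros Hne; [congruence|].
  destruct X as [|b X'].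
  - exists a. split; [left; auto|]. intros x [<-|[]]; lra.
  - destruct IH as [x1 [Hx1 Hm]]; [discriminate|].
    destruct (Rle_dec (f a) (f x1)).
    + exists x1. split; [right; auto|]. intros x [<-|Hx]; auto.
    + exists a. split; [left; auto|]. intros x [<-|Hx]; [lra|]. pose proof (Hm x Hx). lra.
Qed.

Lemma mv_mat_mul X M N v x : mv X (mat_mul X M N) v x = mv X M (mv X N v) x.
Proof. unfold mv, mat_mul.
  rewrite (sumX_ext X _ (fun z => sumX X (fun y => M x y * N y z * v z))).
  2:{ intros. rewrite <- sumX_scal_r. reflexivity. }
  rewrite sumX_swap. apply sumX_ext; intros. rewrite <- sumX_scal. apply sumX_ext; intros. ring. Qed.

Lemma quad_sq_mat X M v : sym_on X M -> quad X (mat_mul X M M) v = dot X (mv X M v) (mv X M v).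
Proof. intros Hs. unfold quad. rewrite (dot_ext X v v (mv X (mat_mul X M M) v) (mv X M (mv X M v)))
  by (auto using mv_mat_mul). apply dot_mv_sym; auto. Qed.

Lemma sq_mat_sym X M : sym_on X M -> sym_on X (mat_mul X M M).
Proof. intros Hs x y Hx Hy. unfold mat_mul. apply sumX_ext; intros z Hz.
  rewrite (Hs x z), (Hs z y) by auto. ring. Qed.

(* an eigenvector [w] of [M^2] for [s^2] yields [M w + s w], an eigenvector of [M] for [s],
   or, if that vanishes, an eigenvector [w] of [-M] for [s] *)
Lemma top_eig_sq_le X M a a2 k : sym_on X M -> top_eig X M a -> top_eig X (mopp M) a2 -> a2 <= a ->
  top_eig X (mat_mul X M M) k -> k <= a * a.
Proof.
  intros Hs Ta Ta2 Ha2 [[w [Hw Hwe]] _].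
  assert (Hk0 : 0 <= k).
  { pose proof (quad_eigvec X _ w k Hwe) as H. rewrite quad_sq_mat in H by auto.
    pose proof (dot_nonneg X (mv X M w)). pose proof (dot_pos X w Hw). nra. }
  set (s := sqrt k). assert (Hss : s * s = k) by (apply sqrt_sqrt; lra).
  assert (Hs0 : 0 <= s) by apply sqrt_pos.
  set (y := fun x => mv X M w x + s * w x).
  assert (Hy : forall x, In x X -> mv X M y x = s * y x).
  { intros x Hx. unfold y, mv at 1.
    rewrite (sumX_ext X _ (fun z => M x z * mv X M w z + s * (M x z * w z))) by (intros; ring).
    rewrite sumX_add, sumX_scal. fold (mv X M (mv X M w) x) (mv X M w x).
    rewrite <- mv_mat_mul, Hwe by auto. rewrite <- Hss. ring. }
  assert (s <= a); [|rewrite <- Hss; nra].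
  destruct (classic (nonzero_on X y)) as [Hnz|Hnz].
  - apply (eigenvalue_le_top_eig X M a y s Ta Hnz Hy).
  - assert (He : forall x, In x X -> mv X (mopp M) w x = s * w x).
    { intros x Hx. rewrite mv_mopp. destruct (Req_dec (y x) 0) as [E|E]; [unfold y in E; lra|].
      exfalso; apply Hnz; exists x; auto. }
    pose proof (eigenvalue_le_top_eig X (mopp M) a2 w s Ta2 Hw He). lra.
Qed.

Lemma mv_norm_le X M a a2 : NoDup X -> X <> [] -> sym_on X M ->
  top_eig X M a -> top_eig X (mopp M) a2 -> a2 <= a ->
  forall v, dot X (mv X M v) (mv X M v) <= a * a * dot X v v.
Proof.
  intros Hnd Hne Hs Ta Ta2 Ha2 v.
  destruct (top_eig_exists X (mat_mul X M M) Hnd Hne (sq_mat_sym X M Hs)) as [k Tk].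
  pose proof (top_eig_sq_le X M a a2 k Hs Ta Ta2 Ha2 Tk).
  rewrite <- quad_sq_mat by auto. destruct Tk as [_ Tk]. pose proof (Tk v).
  pose proof (dot_nonneg X v). nra.
Qed.

Fixpoint mv_iter X M k u := match k with O => u | S k => mv X M (mv_iter X M k u) end.

Lemma mv_iter_norm_le X M a a2 : NoDup X -> X <> [] -> sym_on X M ->
  top_eig X M a -> top_eig X (mopp M) a2 -> a2 <= a ->
  forall k v, dot X (mv_iter X M k v) (mv_iter X M k v) <= (a ^ k) * (a ^ k) * dot X v v.
Proof.
  intros Hnd Hne Hs Ta Ta2 Ha2 k v. induction k; simpl mv_iter; [simpl; lra|].
  pose proof (mv_norm_le X M a a2 Hnd Hne Hs Ta Ta2 Ha2 (mv_iter X M k v)). simpl pow.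
  assert (0 <= a * a) by nra. nra.
Qed.

Lemma mv_iter_ones_le X M a a2 : NoDup X -> X <> [] -> sym_on X M ->
  top_eig X M a -> top_eig X (mopp M) a2 -> a2 <= a -> 0 <= a ->
  forall k x, In x X -> Rabs (mv_iter X M k (fun _ => 1) x) <= a ^ k * INR (length X).
Proof.
  intros Hnd Hne Hs Ta Ta2 Ha2 Ha0 k x Hx.
  pose proof (mv_iter_norm_le X M a a2 Hnd Hne Hs Ta Ta2 Ha2 k (fun _ => 1)) as H.
  assert (HN : dot X (fun _ => 1) (fun _ => 1) = INR (length X)).
  { rewrite <- sumX_const1. unfold dot. apply sumX_ext; intros; ring. }
  rewrite HN in H. pose proof (sq_le_dot X (mv_iter X M k (fun _ => 1)) x Hx).
  pose proof (INR_length_ge1 X Hne).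
  set (P := mv_iter X M k (fun _ => 1) x) in *.
  assert (Hak : 0 <= a ^ k) by (apply pow_le; auto).
  set (B := a ^ k * INR (length X)).
  assert (P * P <= B * B) by (unfold B; nra).
  assert (0 <= B) by (unfold B; nra).
  apply Rsqr_le_abs_0 in H2. rewrite (Rabs_right B) in H2 by lra. exact H2.
Qed.

(* compare [M^k u] with [M^k 1] scaled by the largest entry of [|u|] *)
Lemma mv_iter_ones_ge X M a u : X <> [] -> (forall x y, 0 <= M x y) -> 0 <= a ->
  nonzero_on X u -> (forall x, In x X -> mv X M u x = a * u x) ->
  forall k, exists x0, In x0 X /\ a ^ k <= mv_iter X M k (fun _ => 1) x0.
Proof.
  intros Hne HM Ha0 Hu Hue k.
  destruct (exists_argmax X (fun x => Rabs (u x)) Hne) as [x0 [Hx0 Hm]].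
  set (m := Rabs (u x0)).
  assert (Hmp : 0 < m).
  { destruct Hu as [z [Hz Huz]]. pose proof (Hm z Hz). pose proof (Rabs_pos_lt _ Huz). unfold m; lra. }
  assert (Hit : forall k x, In x X -> mv_iter X M k u x = a ^ k * u x).
  { induction k0; intros x Hx; simpl mv_iter; [simpl; ring|].
    rewrite (mv_ext X M (mv_iter X M k0 u) (fun z => a ^ k0 * u z)) by auto.
    rewrite mv_scal, Hue by auto. simpl; ring. }
  assert (Hbd : forall k x, In x X -> Rabs (mv_iter X M k u x) <= m * mv_iter X M k (fun _ => 1) x).
  { induction k0; intros x Hx; simpl mv_iter; [rewrite Rmult_1_r; apply Hm; auto|].
    unfold mv. eapply Rle_trans; [apply sumX_abs|]. rewrite <- sumX_scal. apply sumX_le; intros z Hz.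
    rewrite Rabs_mult, (Rabs_right (M x z)) by (apply Rle_ge, HM).
    pose proof (IHk0 z Hz). pose proof (HM x z). nra. }
  exists x0. split; auto.
  pose proof (Hbd k x0 Hx0) as H. rewrite Hit, Rabs_mult in H by auto.
  rewrite (Rabs_right (a ^ k)) in H by (apply Rle_ge, pow_le; auto). fold m in H.
  apply (Rmult_le_reg_r m); auto. lra.
Qed.

(** * The simplicial complex and its matrices *)

Ltac eqbs := repeat match goal with
  | |- context [Nat.eqb ?p ?q] => destruct (Nat.eqb_spec p q)
  | H : context [Nat.eqb ?p ?q] |- _ => destruct (Nat.eqb_spec p q)
  end; subst; simpl in *.

Lemma in_simplices n adj x : In x (simplices n adj) <->
  (exists c, x = SV c /\ (c < n)%nat) \/
  (exists a b, x = SE a b /\ (a < b)%nat /\ (b < n)%nat /\ adj a b = true).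
Proof.
  unfold simplices. rewrite in_app_iff, in_map_iff, in_flat_map. split.
  - intros [[c [<- Hc]]|[i [Hi Hj]]].
    + left. exists c. rewrite in_seq in Hc. split; auto; lia.
    + right. rewrite in_flat_map in Hj. destruct Hj as [j [Hj Hx]]. rewrite in_seq in Hi, Hj.
      destruct (adj i j) eqn:E; [|destruct Hx]. destruct Hx as [<-|[]].
      exists i, j. repeat split; auto; lia.
  - intros [[c [-> Hc]]|[a [b [-> [Hab [Hb Hadj]]]]]].
    + left. exists c. split; auto. rewrite in_seq; lia.
    + right. exists a. split; [rewrite in_seq; lia|]. rewrite in_flat_map. exists b.
      split; [rewrite in_seq; lia|]. rewrite Hadj. left; auto.
Qed.

Lemma in_simplices_SE n adj a b : In (SE a b) (simplices n adj) -> (a < b < n)%nat.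
Proof. intros H. apply in_simplices in H.
  destruct H as [[c [E _]]|[a0 [b0 [E [? [? _]]]]]]; inversion E; subst; lia. Qed.

Lemma NoDup_flat_map {A B : Type} (f : A -> list B) (l : list A) :
  NoDup l -> (forall x, In x l -> NoDup (f x)) ->
  (forall x y z, In x l -> In y l -> In z (f x) -> In z (f y) -> x = y) ->
  NoDup (flat_map f l).
Proof.
  induction l as [|a l IH]; intros Hnd Hf Hd; simpl; [constructor|].
  inversion Hnd; subst. apply NoDup_app.
  - apply Hf; left; auto.
  - apply IH; auto. intros; apply Hf; right; auto. intros x y z Hx Hy; apply Hd; right; auto.
  - intros z Hz Hz'. rewrite in_flat_map in Hz'. destruct Hz' as [y [Hy Hzy]].
    assert (a = y) by (apply (Hd a y z); auto; [left; auto|right; auto]). subst. contradiction.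
Qed.

Lemma NoDup_simplices n adj : NoDup (simplices n adj).
Proof.
  unfold simplices. apply NoDup_app.
  - apply NoDup_map_NoDup_ForallPairs; [intros ? ? _ _ H; inversion H; auto|apply seq_NoDup].
  - apply NoDup_flat_map; [apply seq_NoDup| |].
    + intros i _. apply NoDup_flat_map; [apply seq_NoDup| |].
      * intros j _. destruct (adj i j); repeat constructor; simpl; tauto.
      * intros j j' z _ _ H1 H2. destruct (adj i j); [|destruct H1]. destruct (adj i j'); [|destruct H2].
        destruct H1 as [<-|[]]. destruct H2 as [H2|[]]. inversion H2; auto.
    + intros i i' z _ _ H1 H2. rewrite in_flat_map in H1, H2.
      destruct H1 as [j [_ H1]]. destruct H2 as [j' [_ H2]].
      destruct (adj i j); [|destruct H1]. destruct (adj i' j'); [|destruct H2].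
      destruct H1 as [<-|[]]. destruct H2 as [H2|[]]. inversion H2; auto.
  - intros z Hz Hz'. rewrite in_map_iff in Hz. destruct Hz as [c [<- _]].
    rewrite in_flat_map in Hz'. destruct Hz' as [i [_ H]]. rewrite in_flat_map in H.
    destruct H as [j [_ H]]. destruct (adj i j); [|destruct H]. destruct H as [H|[]]. discriminate.
Qed.

Lemma cg_adj_sym x y : cg_adj x y = cg_adj y x.
Proof. destruct x, y; unfold cg_adj, simplex_eqb, meets; eqbs; auto; try lia;
  repeat rewrite ?orb_true_r, ?orb_false_r, ?andb_false_r; auto. Qed.

Definition cg_mat : Mat := fun x y => if cg_adj x y then 1 else 0.

Lemma cg_mat_sym X : sym_on X cg_mat.
Proof. intros x y _ _. unfold cg_mat. rewrite cg_adj_sym. reflexivity. Qed.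

Lemma cg_mat_nonneg x y : 0 <= cg_mat x y.
Proof. unfold cg_mat. destruct (cg_adj x y); lra. Qed.

Lemma cg_mat_diag x : cg_mat x x = 0.
Proof. unfold cg_mat, cg_adj. destruct x; simpl; rewrite ?Nat.eqb_refl; simpl; reflexivity. Qed.

Lemma absdmat_nonneg x y : 0 <= absdmat x y.
Proof. destruct x, y; unfold absdmat; try lra. destruct (_ || _); lra. Qed.

Lemma Rabs_dmat_le o x y : Rabs (dmat o x y) <= absdmat x y.
Proof. destruct x as [|a b], y as [c|]; unfold dmat, absdmat; try (rewrite Rabs_R0; lra).
  destruct (o a b); eqbs; unfold Rabs; destruct (Rcase_abs _); lra. Qed.

Lemma Rabs_hodge_le X o x y : Rabs (hodge X o x y) <= abs_hodge X x y.
Proof. unfold hodge, abs_hodge, mat_mul, mat_add, transp.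
  eapply Rle_trans; [apply sumX_abs|]. apply sumX_le; intros z _. rewrite Rabs_mult.
  pose proof (Rabs_dmat_le o x z). pose proof (Rabs_dmat_le o z x).
  pose proof (Rabs_dmat_le o z y). pose proof (Rabs_dmat_le o y z).
  pose proof (Rabs_triang (dmat o x z) (dmat o z x)). pose proof (Rabs_triang (dmat o z y) (dmat o y z)).
  apply Rmult_le_compat; try apply Rabs_pos; lra. Qed.

Lemma abs_hodge_nonneg X x y : 0 <= abs_hodge X x y.
Proof. unfold abs_hodge, mat_mul, mat_add, transp. apply sumX_nonneg; intros.
  pose proof (absdmat_nonneg x x0). pose proof (absdmat_nonneg x0 x).
  pose proof (absdmat_nonneg x0 y). pose proof (absdmat_nonneg y x0).
  nra. Qed.

Lemma abs_hodge_sym X : sym_on X (abs_hodge X).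
Proof. intros x y _ _. unfold abs_hodge, mat_mul, mat_add, transp. apply sumX_ext; intros; ring. Qed.

Lemma hodge_sym X o : sym_on X (hodge X o).
Proof. intros x y _ _. unfold hodge, mat_mul, mat_add, transp. apply sumX_ext; intros; ring. Qed.

(** * The operators K = |d| + |d|^T and L = 1 + A *)

Definition absD : Mat := fun x y => absdmat x y + absdmat y x.
Definition Kmv (X : list simplex) (u : simplex -> R) : simplex -> R := mv X absD u.

Definition vadd (u v : simplex -> R) : simplex -> R := fun x => u x + v x.
Definition vsub (u v : simplex -> R) : simplex -> R := fun x => u x - v x.
Definition vscal (c : R) (u : simplex -> R) : simplex -> R := fun x => c * u x.
Definition vzero : simplex -> R := fun _ => 0.
Definition edge_part (u : simplex -> R) : simplex -> R :=
  fun x => match x with SV _ => 0 | SE _ _ => u x end.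
Definition vertex_part (u : simplex -> R) : simplex -> R :=
  fun x => match x with SV _ => u x | SE _ _ => 0 end.

Lemma Kmv_vadd X u v : Kmv X (vadd u v) = vadd (Kmv X u) (Kmv X v).
Proof. apply functional_extensionality; intros x. unfold Kmv, mv, vadd. rewrite <- sumX_add.
  apply sumX_ext; intros; ring. Qed.

Lemma Kmv_vsub X u v : Kmv X (vsub u v) = vsub (Kmv X u) (Kmv X v).
Proof. apply functional_extensionality; intros x. unfold Kmv, mv, vsub. rewrite <- sumX_sub.
  apply sumX_ext; intros; ring. Qed.

Lemma Kmv_vscal X c u : Kmv X (vscal c u) = vscal c (Kmv X u).
Proof. apply functional_extensionality; intros x. unfold Kmv, mv, vscal. rewrite <- sumX_scal.
  apply sumX_ext; intros; ring. Qed.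

Lemma Kmv_zero X : Kmv X vzero = vzero.
Proof. apply functional_extensionality; intros x. unfold Kmv, mv, vzero. apply sumX_zero; intros; ring. Qed.

Lemma Kmv_ext X u v x : (forall z, In z X -> u z = v z) -> Kmv X u x = Kmv X v x.
Proof. intros; unfold Kmv; apply mv_ext; auto. Qed.

Lemma edge_part_vadd u v : edge_part (vadd u v) = vadd (edge_part u) (edge_part v).
Proof. apply functional_extensionality; intros []; unfold edge_part, vadd; simpl; ring. Qed.

Lemma edge_part_vsub u v : edge_part (vsub u v) = vsub (edge_part u) (edge_part v).
Proof. apply functional_extensionality; intros []; unfold edge_part, vsub; simpl; ring. Qed.

Lemma edge_part_vscal c u : edge_part (vscal c u) = vscal c (edge_part u).
Proof. apply functional_extensionality; intros []; unfold edge_part, vscal; simpl; ring. Qed.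

Lemma vertex_part_vadd u v : vertex_part (vadd u v) = vadd (vertex_part u) (vertex_part v).
Proof. apply functional_extensionality; intros []; unfold vertex_part, vadd; simpl; ring. Qed.

Lemma vertex_part_vsub u v : vertex_part (vsub u v) = vsub (vertex_part u) (vertex_part v).
Proof. apply functional_extensionality; intros []; unfold vertex_part, vsub; simpl; ring. Qed.

Lemma vertex_part_vscal c u : vertex_part (vscal c u) = vscal c (vertex_part u).
Proof. apply functional_extensionality; intros []; unfold vertex_part, vscal; simpl; ring. Qed.

Lemma edge_part_idem u : edge_part (edge_part u) = edge_part u.
Proof. apply functional_extensionality; intros []; reflexivity. Qed.

Lemma vertex_part_idem u : vertex_part (vertex_part u) = vertex_part u.
Proof. apply functional_extensionality; intros []; reflexivity. Qed.

Lemma edge_part_vertex_part u : edge_part (vertex_part u) = vzero.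
Proof. apply functional_extensionality; intros []; reflexivity. Qed.

Lemma vertex_part_edge_part u : vertex_part (edge_part u) = vzero.
Proof. apply functional_extensionality; intros []; reflexivity. Qed.

Lemma edge_part_zero : edge_part vzero = vzero.
Proof. apply functional_extensionality; intros []; reflexivity. Qed.

Lemma vertex_part_zero : vertex_part vzero = vzero.
Proof. apply functional_extensionality; intros []; reflexivity. Qed.

Lemma edge_vertex_split u : u = vadd (edge_part u) (vertex_part u).
Proof. apply functional_extensionality; intros []; unfold vadd; simpl; ring. Qed.

Lemma edge_part_Kmv X u : edge_part (Kmv X u) = Kmv X (vertex_part u).
Proof. apply functional_extensionality; intros x. unfold edge_part, Kmv, mv.
  destruct x as [c|a b].
  - symmetry. apply sumX_zero. intros [c'|a' b'] _; unfold absD, absdmat; simpl; ring.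
  - apply sumX_ext. intros [c'|a' b'] _; unfold absD, absdmat; simpl; ring. Qed.

Lemma vertex_part_Kmv X u : vertex_part (Kmv X u) = Kmv X (edge_part u).
Proof. apply functional_extensionality; intros x. unfold vertex_part, Kmv, mv.
  destruct x as [c|a b].
  - apply sumX_ext. intros [c'|a' b'] _; unfold absD, absdmat; simpl; ring.
  - symmetry. apply sumX_zero. intros [c'|a' b'] _; unfold absD, absdmat; simpl; ring. Qed.

Definition Lmv (X : list simplex) (u : simplex -> R) : simplex -> R :=
  vsub (vadd (vadd u (Kmv X u)) (Kmv X (Kmv X (edge_part u)))) (vscal 2 (edge_part u)).

Lemma Lmv_ext X u v : (forall z, In z X -> u z = v z) -> forall x, In x X -> Lmv X u x = Lmv X v x.
Proof. intros H x Hx. unfold Lmv, vsub, vadd, vscal.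
  assert (HE : forall z, In z X -> edge_part u z = edge_part v z) by (intros [] ?; simpl; auto).
  rewrite (Kmv_ext X u v x H). rewrite (Kmv_ext X (Kmv X (edge_part u)) (Kmv X (edge_part v)) x).
  2:{ intros; apply Kmv_ext; auto. } rewrite H, HE; auto. Qed.

Ltac simpl_parts Hp1 Hp2 Hq1 Hq2 :=
  repeat progress rewrite ?Kmv_vadd, ?Kmv_vsub, ?Kmv_vscal, ?Kmv_zero, ?edge_part_zero,
    ?vertex_part_zero, ?edge_part_vadd, ?edge_part_vsub, ?edge_part_vscal, ?vertex_part_vadd,
    ?vertex_part_vsub, ?vertex_part_vscal, ?edge_part_Kmv, ?vertex_part_Kmv, ?Hp1, ?Hp2, ?Hq1, ?Hq2.

Lemma edge_vertex_ind (P : (simplex -> R) -> Prop) :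
  (forall p q, edge_part p = p -> vertex_part p = vzero ->
     edge_part q = vzero -> vertex_part q = q -> P (vadd p q)) ->
  forall u, P u.
Proof. intros H u. rewrite (edge_vertex_split u). apply H; auto using edge_part_idem,
  vertex_part_edge_part, edge_part_vertex_part, vertex_part_idem. Qed.

Lemma Lmv_Lmv_sub X u : vsub (Lmv X (Lmv X u)) u = Kmv X (Kmv X (Lmv X u)).
Proof. revert u. apply edge_vertex_ind. intros p q Hp1 Hp2 Hq1 Hq2. unfold Lmv.
  simpl_parts Hp1 Hp2 Hq1 Hq2. apply functional_extensionality; intros x.
  unfold vadd, vsub, vscal, vzero. lra. Qed.

Lemma Kmv2_Lmv_comm X u : Kmv X (Kmv X (Lmv X u)) = Lmv X (Kmv X (Kmv X u)).
Proof. revert u. apply edge_vertex_ind. intros p q Hp1 Hp2 Hq1 Hq2. unfold Lmv.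
  simpl_parts Hp1 Hp2 Hq1 Hq2. apply functional_extensionality; intros x.
  unfold vadd, vsub, vscal, vzero. lra. Qed.

Lemma Lmv_vscal X c u : Lmv X (vscal c u) = vscal c (Lmv X u).
Proof. unfold Lmv. rewrite ?Kmv_vadd, ?Kmv_vsub, ?Kmv_vscal, ?edge_part_vscal, ?Kmv_vscal.
  apply functional_extensionality; intros x. unfold vadd, vsub, vscal. ring. Qed.

Lemma Lmv_vsub X u v : Lmv X (vsub u v) = vsub (Lmv X u) (Lmv X v).
Proof. unfold Lmv. rewrite ?edge_part_vsub, ?Kmv_vsub.
  apply functional_extensionality; intros x. unfold vadd, vsub, vscal. ring. Qed.

Definition nsum (l : list nat) (g : nat -> R) := fold_right Rplus 0 (map g l).

Lemma nsum_ext l g h : (forall c, g c = h c) -> nsum l g = nsum l h.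
Proof. intros H; induction l; simpl; auto. unfold nsum in *; simpl; rewrite H, IHl; auto. Qed.

Lemma nsum_add l g h : nsum l (fun c => g c + h c) = nsum l g + nsum l h.
Proof. induction l; unfold nsum in *; simpl; [lra|]. rewrite IHl; lra. Qed.

Lemma nsum_delta m : forall s p w, nsum (seq s m) (fun c => (if Nat.eqb c p then 1 else 0) * w c) =
  if andb (Nat.leb s p) (Nat.ltb p (s + m)) then w p else 0.
Proof. induction m as [|m IH]; intros s p w.
  - unfold nsum; simpl. destruct (Nat.leb_spec s p), (Nat.ltb_spec p (s + 0)); simpl; auto; lia.
  - unfold nsum in *; simpl. rewrite IH.
    destruct (Nat.eqb_spec s p), (Nat.leb_spec s p), (Nat.ltb_spec p (s + S m)),
      (Nat.leb_spec (S s) p), (Nat.ltb_spec p (S s + m)); simpl; subst; try lia; ring. Qed.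

Lemma sumX_map_SV l g : sumX (map SV l) g = nsum l (fun c => g (SV c)).
Proof. induction l; [reflexivity|]. simpl map. rewrite sumX_cons, IHl. reflexivity. Qed.

Lemma sum_absD_edge_edge n adj a b a' b' : (a < b < n)%nat -> (a' < b' < n)%nat ->
  sumX (simplices n adj) (fun y => absD (SE a b) y * absD y (SE a' b')) =
  cg_mat (SE a b) (SE a' b') + 2 * (if simplex_eq_dec (SE a b) (SE a' b') then 1 else 0).
Proof.
  intros H1 H2. unfold simplices. rewrite sumX_app.
  rewrite (sumX_zero (flat_map _ _)).
  2:{ intros z Hz. rewrite in_flat_map in Hz. destruct Hz as [i [_ Hz]]. rewrite in_flat_map in Hz.
      destruct Hz as [j [_ Hz]]. destruct (adj i j); [|destruct Hz]. destruct Hz as [<-|[]].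
      unfold absD, absdmat. ring. }
  rewrite sumX_map_SV.
  set (iota := fun c => if orb (Nat.eqb c a') (Nat.eqb c b') then 1 else 0).
  rewrite (nsum_ext _ _ (fun c => (if Nat.eqb c a then 1 else 0) * iota c +
                                  (if Nat.eqb c b then 1 else 0) * iota c)).
  2:{ intros c. unfold absD, absdmat, iota. eqbs; try lia; ring. }
  rewrite nsum_add, !nsum_delta.
  destruct (Nat.leb_spec 0 a), (Nat.ltb_spec a (0 + n)), (Nat.leb_spec 0 b), (Nat.ltb_spec b (0 + n)); try lia.
  simpl andb. unfold iota, cg_mat, cg_adj, simplex_eqb, meets.
  destruct (simplex_eq_dec (SE a b) (SE a' b')) as [E|E]; [inversion E; subst|];
  eqbs; try lia; try congruence; ring.
Qed.

Lemma Kmv2_edge_part_SV X u c : Kmv X (Kmv X (edge_part u)) (SV c) = 0.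
Proof. change (Kmv X (Kmv X (edge_part u)) (SV c)) with (vertex_part (Kmv X (Kmv X (edge_part u))) (SV c)).
  rewrite vertex_part_Kmv, edge_part_Kmv, vertex_part_edge_part, Kmv_zero, Kmv_zero. reflexivity. Qed.

(* rows of [A] and [K] at vertices agree; between edges [K^2] counts shared vertices, which is [A]
   off the diagonal and [2] on it *)
Lemma cg_mat_mv_eq n adj u x : let X := simplices n adj in In x X ->
  mv X cg_mat u x = Kmv X u x + Kmv X (Kmv X (edge_part u)) x - 2 * edge_part u x.
Proof.
  intros X Hx. pose proof (NoDup_simplices n adj) as Hnd. fold X in Hnd.
  destruct x as [c|a b].
  - rewrite Kmv2_edge_part_SV. simpl edge_part. unfold Kmv, mv.
    rewrite (sumX_ext X (fun z => cg_mat (SV c) z * u z) (fun z => absD (SV c) z * u z)); [ring|].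
    intros [c'|a' b'] _; unfold cg_mat, absD, cg_adj, simplex_eqb, meets, absdmat; eqbs; ring.
  - assert (Hab : (a < b < n)%nat).
    { apply (in_simplices_SE n adj); auto. }
    set (Ae := fun z => match z with SV _ => 0 | SE _ _ => cg_mat (SE a b) z end).
    assert (E1 : mv X cg_mat u (SE a b) = Kmv X u (SE a b) + sumX X (fun z => Ae z * u z)).
    { unfold Kmv, mv. rewrite <- sumX_add. apply sumX_ext. intros [c'|a' b'] _;
      unfold Ae, cg_mat, absD, cg_adj, simplex_eqb, meets, absdmat; eqbs; ring. }
    assert (E2 : Kmv X (Kmv X (edge_part u)) (SE a b) = sumX X (fun z => Ae z * u z) + 2 * u (SE a b)).
    { unfold Kmv, mv.
      rewrite (sumX_ext X _ (fun y => sumX X (fun z => absD (SE a b) y * absD y z * edge_part u z))).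
      2:{ intros. rewrite <- sumX_scal. apply sumX_ext; intros; ring. }
      rewrite sumX_swap.
      rewrite (sumX_ext X _ (fun z => Ae z * u z + 2 * (if simplex_eq_dec (SE a b) z then u z else 0))).
      { rewrite sumX_add, sumX_scal, sumX_delta' by auto. reflexivity. }
      intros z Hz. rewrite sumX_scal_r. destruct z as [c'|a' b'].
      - simpl edge_part. destruct (simplex_eq_dec (SE a b) (SV c')) as [E|E]; [discriminate|]. simpl. ring.
      - assert (Hab' : (a' < b' < n)%nat).
        { apply (in_simplices_SE n adj); auto. }
        unfold X. rewrite sum_absD_edge_edge by auto. simpl edge_part. unfold Ae.
        destruct (simplex_eq_dec (SE a b) (SE a' b')); ring. }
    rewrite E1, E2. simpl edge_part. ring.
Qed.

Lemma Lmv_eq_one_add_cg_mat n adj u x : let X := simplices n adj in In x X ->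
  Lmv X u x = u x + mv X cg_mat u x.
Proof. intros X Hx. pose proof (cg_mat_mv_eq n adj u x Hx) as H. fold X in H.
  unfold Lmv, vsub, vadd, vscal. rewrite H. ring. Qed.

Lemma abs_hodge_mv X u x : mv X (abs_hodge X) u x = Kmv X (Kmv X u) x.
Proof. unfold Kmv, mv, abs_hodge, mat_mul, mat_add, transp.
  rewrite (sumX_ext X _ (fun y => sumX X (fun z => absD x z * absD z y * u y))).
  2:{ intros. rewrite <- sumX_scal_r. reflexivity. }
  rewrite sumX_swap. apply sumX_ext; intros. rewrite <- sumX_scal.
  apply sumX_ext; intros. unfold absD. ring. Qed.

(** * The spectral radius of the sign-less Hodge Laplacian *)

Lemma sub_inv_le_compat x y : 1 <= x -> x <= y -> x - / x <= y - / y.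
Proof. intros. assert (/ y <= / x) by (apply Rinv_le_contravar; lra). lra. Qed.

Lemma sub_inv_lipschitz x y : 1 <= x -> x <= y -> (y - / y) - (x - / x) <= 2 * (y - x).
Proof. intros. assert (/ x - / y = (y - x) / (x * y)) by (field; lra).
  assert ((y - x) / (x * y) <= y - x).
  { unfold Rdiv. assert (0 < / (x * y) <= 1).
    { split; [apply Rinv_0_lt_compat; nra|]. rewrite <- Rinv_1. apply Rinv_le_contravar; nra. }
    nra. }
  lra. Qed.

Lemma sub_inv_surj eta : 0 <= eta -> exists m, 1 <= m /\ eta = m - / m.
Proof.
  intros Heta. set (sq := sqrt (eta * eta + 4)).
  assert (Hsq : sq * sq = eta * eta + 4) by (apply sqrt_sqrt; nra).
  assert (Hsq0 : 0 <= sq) by apply sqrt_pos.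
  exists ((eta + sq) / 2). split; [nra|].
  apply (Rmult_eq_reg_l ((eta + sq) / 2)); [|nra]. field_simplify; nra.
Qed.

Lemma Lmv_Lmv_of_K2_eigvec X p eta : (forall x, In x X -> Kmv X (Kmv X p) x = eta * p x) ->
  forall x, In x X -> Lmv X (Lmv X p) x = eta * Lmv X p x + p x.
Proof.
  intros HKp x Hx. pose proof (equal_f (Lmv_Lmv_sub X p) x) as E. unfold vsub at 1 in E.
  rewrite (equal_f (Kmv2_Lmv_comm X p) x), (Lmv_ext X (Kmv X (Kmv X p)) (vscal eta p)), Lmv_vscal in E;
    auto.
  unfold vscal in E. lra.
Qed.

(* on the edge part [L] acts as [K + K^2 - 1] and [K] maps edges to vertices, on the vertex part
   [L] acts as [1 + K] and [K] maps vertices to edges: either way [K p] is read off [L p] *)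
Lemma Kmv_zero_of_Lmv_eigvec X p mu : (edge_part p = p \/ vertex_part p = p) ->
  (forall x, In x X -> Lmv X p x = mu * p x) -> forall x, In x X -> Kmv X p x = 0.
Proof.
  intros Hsup HLp x Hx. pose proof (HLp x Hx) as E. unfold Lmv, vsub, vadd, vscal in E.
  destruct Hsup as [HE|HV].
  - destruct x as [c|a0 b0].
    + rewrite Kmv2_edge_part_SV in E. assert (p (SV c) = 0) by (rewrite <- HE; reflexivity).
      rewrite H in E. simpl edge_part in E. lra.
    + rewrite <- HE, <- vertex_part_Kmv. reflexivity.
  - assert (HE : edge_part p = vzero) by (rewrite <- HV; apply edge_part_vertex_part).
    destruct x as [c|a0 b0].
    + rewrite <- HV, <- edge_part_Kmv. reflexivity.
    + assert (p (SE a0 b0) = 0) by (rewrite <- HV; reflexivity).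
      rewrite HE, Kmv_zero, Kmv_zero, H in E. unfold vzero in E. lra.
Qed.

Lemma abs_hodge_top_ge n adj a eta : let X := simplices n adj in
  top_eig X cg_mat a -> top_eig X (abs_hodge X) eta -> 0 <= a -> (1 + a) - / (1 + a) <= eta.
Proof.
  intros X Ta Th Ha0. destruct Ta as [[u [Hu Hue]] _]. set (r := 1 + a).
  assert (HL : forall x, In x X -> Lmv X u x = vscal r u x).
  { intros x Hx. pose proof (Lmv_eq_one_add_cg_mat n adj u x Hx) as E. fold X in E. rewrite E.
    unfold vscal. rewrite Hue; auto. unfold r; ring. }
  assert (HK : forall x, In x X -> Kmv X (Kmv X u) x = (r - / r) * u x).
  { intros x Hx. pose proof (equal_f (Lmv_Lmv_sub X u) x) as E. unfold vsub at 1 in E.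
    rewrite (Lmv_ext X (Lmv X u) (vscal r u) HL x Hx), Lmv_vscal in E. unfold vscal at 1 in E.
    rewrite HL in E by auto.
    rewrite (Kmv_ext X (Kmv X (Lmv X u)) (Kmv X (vscal r u)) x) in E
      by (intros; apply Kmv_ext; auto).
    rewrite !Kmv_vscal in E. unfold vscal in E.
    assert (0 < r) by (unfold r; lra).
    apply (Rmult_eq_reg_l r); [|lra].
    replace (r * ((r - / r) * u x)) with (r * (r * u x) - u x) by (field; lra). lra. }
  apply (eigenvalue_le_top_eig X (abs_hodge X) eta u); auto.
  intros x Hx. rewrite abs_hodge_mv. apply HK; auto.
Qed.

(* with [eta = m - 1/m], [(L - m)(L + 1/m) p = 0], so [L p + p/m] is an eigenvector of [L]
   for [m] unless it vanishes, in which case [K p = 0] *)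
Lemma Kmv2_eigenvalue_le n adj a eta p : let X := simplices n adj in
  top_eig X cg_mat a -> 0 <= a -> nonzero_on X p ->
  (forall x, In x X -> Kmv X (Kmv X p) x = eta * p x) -> (edge_part p = p \/ vertex_part p = p) ->
  eta <= (1 + a) - / (1 + a).
Proof.
  intros X Ta Ha0 Hp HKp Hsup.
  assert (Hr : 0 <= (1 + a) - / (1 + a)).
  { assert (/ (1 + a) <= 1) by (rewrite <- Rinv_1; apply Rinv_le_contravar; lra). lra. }
  destruct (Rlt_dec eta 0) as [|Hpos]; [lra|].
  destruct (sub_inv_surj eta) as [m [Hm1 Heta]]; [lra|].
  set (p' := vsub (Lmv X p) (vscal (- / m) p)).
  assert (Hp' : forall x, In x X -> Lmv X p' x = m * p' x).
  { intros x Hx. unfold p'. rewrite Lmv_vsub, Lmv_vscal. unfold vsub, vscal.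
    rewrite (Lmv_Lmv_of_K2_eigvec X p eta HKp x Hx), Heta. field. lra. }
  destruct (classic (nonzero_on X p')) as [Hnz|Hnz].
  - assert (He : forall x, In x X -> mv X cg_mat p' x = (m - 1) * p' x).
    { intros x Hx. pose proof (Lmv_eq_one_add_cg_mat n adj p' x Hx) as E. fold X in E.
      rewrite Hp' in E by auto. lra. }
    pose proof (eigenvalue_le_top_eig X cg_mat a p' (m - 1) Ta Hnz He).
    rewrite Heta. apply sub_inv_le_compat; lra.
  - assert (HLp : forall x, In x X -> Lmv X p x = - / m * p x).
    { intros x Hx. destruct (Req_dec (p' x) 0) as [E|E]; [unfold p', vsub, vscal in E; lra|].
      exfalso; apply Hnz; exists x; auto. }
    pose proof (Kmv_zero_of_Lmv_eigvec X p _ Hsup HLp) as HK0.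
    destruct Hp as [z [Hz Hpz]].
    pose proof (HKp z Hz) as E. unfold Kmv at 1, mv in E. rewrite sumX_zero in E.
    2:{ intros x Hx. fold (Kmv X p). rewrite HK0; auto; ring. }
    assert (eta = 0) by (apply (Rmult_eq_reg_r (p z)); auto; lra). lra.
Qed.

(* [|H| = K^2] preserves the vertex and the edge parts, so an eigenvector may be taken in one of them *)
Lemma abs_hodge_top_le n adj a eta : let X := simplices n adj in
  top_eig X cg_mat a -> 0 <= a -> top_eig X (abs_hodge X) eta -> eta <= (1 + a) - / (1 + a).
Proof.
  intros X Ta Ha0 Th. destruct Th as [[w [Hw Hwe]] _].
  assert (HK : forall x, In x X -> Kmv X (Kmv X w) x = eta * w x) by (intros; rewrite <- abs_hodge_mv; auto).
  destruct Hw as [z [Hz Hwz]]. destruct z as [c|a0 b0].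
  - apply (Kmv2_eigenvalue_le n adj a eta (vertex_part w)); auto.
    + exists (SV c); auto.
    + intros x Hx. rewrite <- edge_part_Kmv, <- vertex_part_Kmv.
      destruct x; unfold vertex_part, edge_part; auto; ring.
    + right; apply vertex_part_idem.
  - apply (Kmv2_eigenvalue_le n adj a eta (edge_part w)); auto.
    + exists (SE a0 b0); auto.
    + intros x Hx. rewrite <- vertex_part_Kmv, <- edge_part_Kmv.
      destruct x; unfold vertex_part, edge_part; auto; ring.
    + left; apply edge_part_idem.
Qed.

Lemma abs_hodge_top_eig_eq n adj a eta : let X := simplices n adj in
  top_eig X cg_mat a -> 0 <= a -> top_eig X (abs_hodge X) eta -> eta = (1 + a) - / (1 + a).
Proof. intros X Ta Ha0 Te.
  pose proof (abs_hodge_top_ge n adj a eta Ta Te Ha0).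
  pose proof (abs_hodge_top_le n adj a eta Ta Ha0 Te). lra. Qed.

(** * Walk counts *)

Lemma INR_sum_list {A : Type} (l : list A) (f : A -> nat) :
  INR (fold_right Nat.add 0%nat (map f l)) = fold_right Rplus 0 (map (fun y => INR (f y)) l).
Proof. induction l; [reflexivity|]. simpl. rewrite plus_INR, IHl. reflexivity. Qed.

Lemma INR_walks X k x : INR (walks X k x) = mv_iter X cg_mat k (fun _ => 1) x.
Proof. revert x. induction k; intros x; [reflexivity|]. simpl walks. rewrite INR_sum_list.
  simpl mv_iter. unfold mv. apply sumX_ext; intros. rewrite <- IHk. unfold cg_mat.
  destruct (cg_adj x x0); simpl; ring. Qed.

Lemma fold_max_ge {A : Type} (l : list A) (f : A -> nat) x :
  In x l -> (f x <= fold_right Nat.max 0 (map f l))%nat.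
Proof. induction l as [|a l IH]; intros Hx; [destruct Hx|]. simpl.
  destruct Hx as [<-|Hx]; [apply Nat.le_max_l|]. eapply Nat.le_trans; [apply IH; auto|apply Nat.le_max_r]. Qed.

Lemma fold_max_cases {A : Type} (l : list A) (f : A -> nat) :
  fold_right Nat.max 0%nat (map f l) = 0%nat \/
  exists x, In x l /\ fold_right Nat.max 0%nat (map f l) = f x.
Proof. induction l as [|a l IH]; [left; reflexivity|]. simpl.
  destruct (Nat.max_dec (f a) (fold_right Nat.max 0%nat (map f l))) as [E|E]; rewrite E.
  - right; exists a; split; [left|]; auto.
  - destruct IH as [H|[x [Hx H]]]; [left; auto|right; exists x; split; [right|]; auto]. Qed.

Lemma kth_root_bounds (P a N : R) (k : nat) : (1 <= k)%nat -> 0 <= a -> 1 <= N ->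
  a ^ k <= P -> P <= a ^ k * N ->
  a <= kth_root P k /\ kth_root P k <= a * Rpower N (/ INR k).
Proof.
  intros Hk Ha HN Hlo Hhi. unfold kth_root.
  assert (HkR : 0 < INR k) by (apply lt_0_INR; lia).
  destruct (Req_dec a 0) as [Ha0|Ha0].
  - subst a. rewrite pow_i in Hlo, Hhi by lia.
    destruct (Rle_dec P 0); [lra|]. lra.
  - assert (Hap : 0 < a) by lra. assert (Hak : 0 < a ^ k) by (apply pow_lt; auto).
    destruct (Rle_dec P 0); [lra|].
    assert (Hroot : Rpower (a ^ k) (/ INR k) = a).
    { rewrite <- Rpower_pow by auto. rewrite Rpower_mult. rewrite Rinv_r by lra. apply Rpower_1; auto. }
    split.
    + rewrite <- Hroot at 1. apply Rle_Rpower_l; [left; apply Rinv_0_lt_compat; auto|lra].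
    + eapply Rle_trans; [apply Rle_Rpower_l with (b := a ^ k * N); [left; apply Rinv_0_lt_compat; auto|lra]|].
      rewrite <- Rpower_mult_distr by lra. rewrite Hroot. lra.
Qed.

Lemma kth_root_Pmax_bounds X a a2 k : NoDup X -> X <> [] ->
  top_eig X cg_mat a -> top_eig X (mopp cg_mat) a2 -> a2 <= a -> 0 <= a -> (1 <= k)%nat ->
  a <= kth_root (INR (Pmax X k)) k <= a * Rpower (INR (length X)) (/ INR k).
Proof.
  intros Hnd Hne Ta Ta2 Ha2 Ha0 Hk. pose proof Ta as [[u [Hu Hue]] _].
  apply kth_root_bounds; auto using INR_length_ge1.
  - destruct (mv_iter_ones_ge X cg_mat a u Hne cg_mat_nonneg Ha0 Hu Hue k) as [x0 [Hx0 Hw]].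
    eapply Rle_trans; [apply Hw|]. rewrite <- INR_walks. apply le_INR. apply fold_max_ge; auto.
  - unfold Pmax. destruct (fold_max_cases X (walks X k)) as [E|[x [Hx E]]]; rewrite E.
    + simpl. pose proof (pow_le a k Ha0). pose proof (INR_length_ge1 X Hne). nra.
    + rewrite INR_walks. eapply Rle_trans; [apply Rle_abs|].
      apply (mv_iter_ones_le X cg_mat a a2); auto using cg_mat_sym.
Qed.

Lemma exp_le_1_add_2x y : 0 <= y <= 1/2 -> exp y <= 1 + 2 * y.
Proof. intros Hy. pose proof (exp_ineq1_le (- y)).
  assert (exp y * exp (- y) = 1) by (rewrite <- exp_plus; replace (y + - y) with 0 by ring; apply exp_0).
  pose proof (exp_pos y). nra. Qed.

Lemma cv_sub_inv_one_add (t : nat -> R) a N : 0 <= a -> 1 <= N ->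
  (forall k, a <= t k <= a * Rpower N (/ INR (S k))) ->
  Un_cv (fun k => (1 + t k) - / (1 + t k)) ((1 + a) - / (1 + a)).
Proof.
  intros Ha HN Ht eps Heps. unfold Rpower in Ht. set (L := ln N) in Ht.
  assert (HL : 0 <= L).
  { unfold L. destruct (Req_dec N 1) as [->|E]; [rewrite ln_1; lra|].
    rewrite <- ln_1. left. apply ln_increasing; lra. }
  set (B := 2 * L + 4 * a * L / eps + 1).
  destruct (INR_archimed 1 B) as [K HK]; [lra|]. rewrite Rmult_1_r in HK.
  exists K. intros k Hk. unfold Rdist.
  set (D := INR (S k)).
  assert (HD : D > B) by (unfold D; rewrite S_INR; pose proof (le_INR K k Hk); lra).
  assert (HB0 : 4 * a * L / eps >= 0).
  { unfold Rdiv. apply Rle_ge, Rmult_le_pos; [nra|left; apply Rinv_0_lt_compat; lra]. }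
  assert (HB1 : 0 < B) by (unfold B; lra). assert (HDp : 0 < D) by lra.
  set (y := / D * L).
  assert (HyD : y * D = L) by (unfold y; field; lra).
  assert (Hy0 : 0 <= y) by (unfold y; apply Rmult_le_pos; [left; apply Rinv_0_lt_compat|]; lra).
  assert (HD2 : D > 2 * L) by (unfold B in HD; lra).
  assert (Hy1 : y <= 1/2) by (destruct (Rle_dec y (1/2)); auto; nra).
  assert (HaL : eps * B >= 4 * a * L).
  { unfold B. replace (eps * (2 * L + 4 * a * L / eps + 1)) with (2 * eps * L + 4 * a * L + eps)
      by (field; lra). nra. }
  assert (Hay : 4 * a * y < eps) by nra.
  destruct (Ht k) as [Hlo Hhi]. fold D in Hhi. fold y in Hhi.
  pose proof (exp_le_1_add_2x y (conj Hy0 Hy1)).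
  assert (t k - a <= 2 * a * y) by nra.
  pose proof (sub_inv_le_compat (1 + a) (1 + t k) ltac:(lra) ltac:(lra)).
  pose proof (sub_inv_lipschitz (1 + a) (1 + t k) ltac:(lra) ltac:(lra)).
  rewrite Rabs_right by lra. lra.
Qed.

Theorem mainTheorem4 (n : nat) (adj : nat -> nat -> bool) (o : nat -> nat -> bool)
  (adj_sym : forall i j, adj i j = adj j i)
  (adj_irr : forall i, adj i i = false)
  (n_pos : (1 <= n)%nat) :
  let X := simplices n adj in
  exists rho : R,
    spectral_radius X (hodge X o) rho /\
    (forall k : nat, (1 <= k)%nat -> rho <= hbound X k) /\
    exists rho' : R,
      spectral_radius X (abs_hodge X) rho' /\
      Un_cv (fun k => hbound X (S k)) rho'.
Proof.
  intros X.
  assert (Hnd : NoDup X) by apply NoDup_simplices.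
  assert (Hin0 : In (SV 0) X) by (apply in_simplices; left; exists 0%nat; split; auto; lia).
  assert (Hne : X <> []) by (intros E; rewrite E in Hin0; destruct Hin0).
  destruct (top_eig_exists X cg_mat Hnd Hne (cg_mat_sym X)) as [a Ta].
  destruct (top_eig_exists X (mopp cg_mat) Hnd Hne (mopp_sym X _ (cg_mat_sym X))) as [a2 Ta2].
  destruct (top_eig_exists X (abs_hodge X) Hnd Hne (abs_hodge_sym X)) as [eta Te].
  assert (Ha0 : 0 <= a) by (rewrite <- (cg_mat_diag (SV 0)); apply (diag_le_top_eig X); auto).
  assert (Ha2 : a2 <= a) by (apply (top_eig_mopp_le X cg_mat); auto; apply cg_mat_nonneg).
  pose proof (abs_hodge_top_eig_eq n adj a eta Ta Ha0 Te) as Heta.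
  pose proof (kth_root_Pmax_bounds X a a2) as Hroot.
  destruct (spectral_radius_dominated X (hodge X o) (abs_hodge X) eta Hnd Hne
              (hodge_sym X o) (Rabs_hodge_le X o) Te) as [rho [Hrho Hle]].
  exists rho. split; [exact Hrho|split].
  - intros k Hk. destruct (Hroot k Hnd Hne Ta Ta2 Ha2 Ha0 Hk) as [Hlo _]. unfold hbound, rk.
    pose proof (sub_inv_le_compat (1 + a) (1 + kth_root (INR (Pmax X k)) k) ltac:(lra) ltac:(lra)). lra.
  - exists eta. split; [apply spectral_radius_nonneg; auto using abs_hodge_sym, abs_hodge_nonneg|].
    rewrite Heta. unfold hbound, rk.
    apply (cv_sub_inv_one_add (fun k => kth_root (INR (Pmax X (S k))) (S k)) a (INR (length X)));
      auto using INR_length_ge1.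
    intros k. apply Hroot; auto; lia.
Qed.
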